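(* Let $b\ge2$ be an integer and let $w=d_1\dots d_p$ be a fixed block of $b$-ary digits with $p\ge1$. Let $v=d_2\dots d_p$. Then $M_w(v,k)=Z_w(v,k)(b^{-1})$, the total mass $\sum b^{-|X|}$ of the strings $X$ with prefix $v$ and exactly $k$ occurrences of $w$, is finite and has the same value for every $k\ge0$.
   Context: Strings are finite sequences over $\{0,\dots,b-1\}$. $|X|$ is the length of $X$. Occurrences of $w$ are counted possibly overlapping. $Z_w(v,k)=\sum_l c_l t^l$, where $c_l$ is the number of strings of length $l$ with prefix $v$ containing exactly $k$ occurrences of $w$. *)

From HB Require Import structures.
From mathcomp Require Import all_boot all_order all_algebra.
From mathcomp Require Import all_classical all_reals all_analysis.
Set Implicit Arguments. Unset Strict Implicit. Unset Printing Implicit Defensive.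

Definition occurrences (b : nat) (w X : seq 'I_b) : nat :=
  count (fun i => take (size w) (drop i X) == w) (iota 0 (size X)).

(* c_l : number of strings of length l with prefix v and exactly k
   occurrences of w  (the l-th coefficient of Z_w(v,k)). *)
Definition Zcoef (b : nat) (w v : seq 'I_b) (k l : nat) : nat :=
  #|[set X : l.-tuple 'I_b | prefix v X && (occurrences w X == k)]|.

From HB Require Import structures.
From mathcomp Require Import all_boot all_order all_algebra.
From mathcomp Require Import all_classical all_reals all_analysis.
From mathcomp Require Import zify.
Import Order.TTheory GRing.Theory Num.Theory.
Import numFieldNormedType.Exports.

(* Weigh a word [X] by [b ^- size X] and let the mass of a set of words be
   the sum of the weights of its elements, so that M_w(v,k) is the mass of
   [occ_words w v k], the words with prefix [v] and [k] occurrences of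
   [w = d :: v].  Cutting a word of [occ_words w v k.+1] just after the letter
   [d] of its first occurrence of [w] writes it uniquely as [U ++ Y], with [Y]
   in [occ_words w v k] and [U] a return word: [U ++ v] starts with [v] and
   contains [w] only at its end.  Hence M(k+1) = Phi M(k), where Phi is the
   mass of the return words.  M(0) is finite because the coefficients of
   Z_w(v,0) decay geometrically: each further block of [size w] letters must
   differ from [w].  Finally, appending one letter to the words of
   [occ_words w v 0] preserves mass and yields the same set without [v],
   together with the words [U ++ v]; so M(0) = M(0) - b^-|v| + Phi b^-|v|,
   whence Phi = 1 and M(k) = M(0) for all [k]. *)

Set Implicit Arguments.
Unset Strict Implicit.
Unset Printing Implicit Defensive.

Lemma prefix_cat_size (T : eqType) (s S Z : seq T) :
  (size s <= size S)%N -> prefix s (S ++ Z) = prefix s S.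
Proof. by move=> ?; rewrite !prefixE takel_cat. Qed.

Section Occurrences.
Variables (b : nat) (w : seq 'I_b).
Local Notation occ := (occurrences w).

Lemma occurrences_cons x X : occ (x :: X) = (prefix w (x :: X) + occ X)%N.
Proof.
rewrite /occurrences [prefix _ _]prefixE /=; congr (_ + _)%N.
by rewrite -[1%N]addn0 iotaDl count_map.
Qed.

Lemma occurrences_small X : (size X < size w)%N -> occ X = 0%N.
Proof.
elim: X => [//|x X IH] /= ltXw; rewrite occurrences_cons IH ?(ltnW ltXw) //.
by case: (boolP (prefix _ _)) => // /size_prefix /=; lia.
Qed.

Lemma occurrences_cat_ge S T : (occ S + occ T <= occ (S ++ T))%N.
Proof.
elim: S => [//|x S IH] /=; rewrite !occurrences_cons -addnA leq_add //.
by case: (boolP (prefix _ _)) => // /(prefix_catl T) ->.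
Qed.

Lemma leq_occurrences_cat S T : (occ S <= occ (S ++ T))%N.
Proof. exact: leq_trans (leq_addr _ _) (occurrences_cat_ge S T). Qed.

(* An occurrence starting inside [A ++ B], where [B] has the length of [w],
   ends inside [A ++ B]; the others start inside [behead B ++ Z]. *)
Lemma occurrences_cat_block A B Z : size B = size w ->
  occ (A ++ B ++ Z) = (occ (A ++ B) + occ (behead B ++ Z))%N.
Proof.
move=> szB; elim: A => [|a A IH] /=.
  case: B szB => [//|x B] szB /=.
  rewrite !occurrences_cons -cat_cons prefix_cat_size ?szB //.
  by rewrite (@occurrences_small B) ?addn0 // -szB.
rewrite !occurrences_cons IH addnA catA -cat_cons prefix_cat_size //=.
by rewrite size_cat -szB; lia.
Qed.

End Occurrences.

Section FirstOccurrence.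
Variables (b : nat) (d : 'I_b) (v : seq 'I_b).
Local Notation w := (d :: v).
Local Notation occ := (occurrences w).

Lemma occurrences_self : occ w = 1%N.
Proof. by rewrite occurrences_cons prefix_refl occurrences_small. Qed.

Lemma occurrences_cat_w_gt0 A Z : (0 < occ (A ++ w ++ Z))%N.
Proof.
have := occurrences_cat_ge w A w; have := leq_occurrences_cat w (A ++ w) Z.
by rewrite occurrences_self catA; lia.
Qed.

Lemma occurrences_cat_w A Z : occ (A ++ w ++ Z) = (occ (A ++ w) + occ (v ++ Z))%N.
Proof. exact: occurrences_cat_block. Qed.

Lemma first_occurrence X : (0 < occ X)%N ->
  exists A Z, X = A ++ w ++ Z /\ occ (A ++ w) = 1%N.
Proof.
elim: X => [//|x X IH]; rewrite occurrences_cons.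
case: (boolP (prefix w (x :: X))) => [/prefixP [Z ->] _ | wNx /IH [A [Z [EX occA]]]].
  by exists [::], Z; rewrite occurrences_self.
exists (x :: A), Z; split; first by rewrite EX.
rewrite occurrences_cons occA; case: (boolP (prefix w (x :: A ++ w))) => // wxA.
by case/negP: wNx; rewrite EX -cat_cons catA prefix_catl.
Qed.

Lemma first_occurrence_leftmost A T Z Z' : occ (A ++ w) = 1%N ->
  A ++ w ++ Z = T ++ w ++ Z' -> (size A <= size T)%N.
Proof.
elim: T A => [|t T IH] [|a A] //= occA.
  move=> Ew; move: occA; rewrite occurrences_cons.
  have -> : prefix w (a :: A ++ w).
    have lew : (size w <= size (a :: A ++ w))%N by rewrite /= size_cat /=; lia.
    by rewrite -(prefix_cat_size Z lew) cat_cons -catA Ew prefix_prefix.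
  by have := occurrences_cat_w_gt0 A [::]; rewrite cats0; lia.
case=> _ /IH; apply; move: occA; rewrite occurrences_cons.
by have := occurrences_cat_w_gt0 A [::]; rewrite cats0; lia.
Qed.

End FirstOccurrence.

Local Open Scope classical_set_scope.
Local Open Scope ring_scope.

Lemma cat_set_inj (T : eqType) (P : set (seq T * seq T)) :
  (forall z z', P z -> P z' -> z.1 ++ z.2 = z'.1 ++ z'.2 -> size z.1 = size z'.1) ->
  set_inj P (fun z => z.1 ++ z.2).
Proof.
move=> szP [X Y] [X' Y'] /set_mem Pz /set_mem Pz' E.
have /= szX := szP _ _ Pz Pz' E.
by move: E => /= /eqP; rewrite eqseq_cat // => /andP [/eqP -> /eqP ->].
Qed.

Section Esum.
Variable R : realType.
Local Open Scope ereal_scope.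

Lemma esumZl (T : choiceType) (S : set T) (a : T -> \bar R) (r : R) :
  (0 <= r)%R -> (forall x, 0 <= a x) ->
  \esum_(x in S) (r%:E * a x) = r%:E * \esum_(x in S) a x.
Proof.
move=> r0 a0.
have sumZ A : fsets S A -> \sum_(x \in A) (r%:E * a x) = r%:E * \sum_(x \in A) a x.
  by move=> [finA _]; rewrite !fsbig_finite // ge0_sume_distrr.
rewrite /esum -ereal_supZl //; last first.
  by apply/set0P; exists 0; exists set0; [exact: fsets_set0 | rewrite fsbig_set0].
congr ereal_sup; apply/seteqP; split => y.
  by move=> [A SA <-]; exists (\sum_(x \in A) a x); [exists A | rewrite sumZ].
by move=> [_ [A SA <-] <-]; exists A; rewrite ?sumZ.
Qed.

Lemma subset_esum (T : choiceType) (S S' : set T) (a : T -> \bar R) :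
  S `<=` S' -> \esum_(x in S) a x <= \esum_(x in S') a x.
Proof.
move=> SS'; apply: ge_ereal_sup => _ [A [finA AS] <-].
by apply: ereal_sup_ubound; exists A => //; split => //; apply: subset_trans SS'.
Qed.

Lemma esum_cst_finType (T : finType) (P : pred T) (c : R) : (0 <= c)%R ->
  \esum_(x in [set x | P x]) c%:E = (#|P|%:R * c)%:E.
Proof.
move=> c0; rewrite esum_fset //; last exact: finite_finset.
rewrite (fsbigE (enum P)) //=; last 3 first.
- exact: enum_uniq.
- by move=> x /=; rewrite mem_enum.
- by move=> x /= Px; rewrite mem_enum /in_mem /= Px.
rewrite big_seq_cond (eq_bigl (fun x => x \in enum P)); last first.
  by move=> x; rewrite mem_enum mem_setE /in_mem /= andbb.
rewrite big_enum_cond sumEFin (eq_bigl [in P]) ?sumr_const ?mulr_natl //.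
by move=> x; rewrite mem_enum /in_mem /= andbb.
Qed.

End Esum.

Section Mass.
Variables (R : realType) (b : nat).
Local Open Scope ereal_scope.

Definition mass (S : set (seq 'I_b)) : \bar R :=
  \esum_(X in S) ((b%:R : R) ^- size X)%:E.

Let weightD m n : (b%:R : R) ^- (m + n) = (b%:R ^- m * b%:R ^- n)%R.
Proof. by rewrite exprD invfM. Qed.

Lemma mass_ge0 S : 0 <= mass S.
Proof. exact: esum_ge0. Qed.

Lemma le_mass S S' : S `<=` S' -> mass S <= mass S'.
Proof. exact: subset_esum. Qed.

Lemma mass_set1 X : mass [set X] = ((b%:R : R) ^- size X)%:E.
Proof. exact: esum_set1. Qed.

Lemma mass_cat S T t : set_inj (S `*` T) (fun z => z.1 ++ z.2) -> mass T = t%:E ->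
  mass [set z.1 ++ z.2 | z in S `*` T] = mass S * t%:E.
Proof.
move=> catI mT; have t0 : (0 <= t)%R by rewrite -lee_fin -mT mass_ge0.
rewrite /mass esum_image //.
rewrite -(esum_esum (I := S) (J := fun=> T) (a := fun X Y => (b%:R ^- size (X ++ Y))%:E)) //.
under eq_esum => X _.
  under eq_esum => Y _ do rewrite size_cat weightD EFinM.
  rewrite esumZl ?invr_ge0 ?exprn_ge0 // -/(mass T) mT muleC.
  over.
by rewrite esumZl // muleC.
Qed.

Lemma mass_slice (P : pred (seq 'I_b)) n :
  mass ([set X | P X] `&` [set X | size X = n]) =
  (#|[set t : n.-tuple 'I_b | P t]%SET|%:R * b%:R ^- n)%:E.
Proof.
rewrite /mass (eq_esum (b := fun=> ((b%:R : R) ^- n)%:E)); last by move=> X [_ ->].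
rewrite (reindex_esum [set t : n.-tuple 'I_b | P t] _ val).
  rewrite esum_cst_finType ?invr_ge0 ?exprn_ge0 //; congr (_%:R * _)%:E.
  by apply: eq_card => t; rewrite inE.
split.
- by move=> t /= Pt; split => //; exact: size_tuple.
- by move=> t t' _ _; exact: val_inj.
- by move=> X /= [PX /eqP szX]; exists (Tuple szX).
Qed.

Lemma mass_size n : (0 < b)%N -> mass [set X | size X = n] = 1.
Proof.
move=> b_gt0; have := mass_slice xpredT n.
rewrite [X in mass X](_ : _ = [set X | size X = n]); last first.
  by apply/seteqP; split => X // [].
move=> ->; rewrite (eq_card (B := [set: n.-tuple 'I_b]%SET)); last by move=> t; rewrite !inE.
rewrite cardsT card_tuple card_ord natrX mulfV // expf_neq0 // pnatr_eq0 -lt0n //.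
Qed.

Lemma mass_size_neq (w : seq 'I_b) : (0 < b)%N ->
  mass ([set X | X != w] `&` [set X | size X = size w]) = (1 - b%:R ^- size w)%:E.
Proof.
move=> b_gt0; rewrite mass_slice; congr EFin.
have -> : [set t : (size w).-tuple 'I_b | val t != w]%SET = [set~ in_tuple w]%SET.
  by apply/setP => t; rewrite !inE -val_eqE.
rewrite cardsC1 card_tuple card_ord -subn1 natrB ?expn_gt0 ?b_gt0 // mulrBl mul1r.
by rewrite natrX mulfV // expf_neq0 // pnatr_eq0 -lt0n.
Qed.

End Mass.

Section Series.
Variable R : realType.

Lemma cvgn_series_decay (u : R^nat) m p (K : R) :
  (forall l, 0 <= u l) -> 0 <= K -> K < 1 ->
  (forall l, (m <= l)%N -> u (l + p)%N <= K * u l) -> cvgn (series u).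
Proof.
move=> u0 K0 K1 decay.
have S_nd : nondecreasing_seq (series u) by apply: nondecreasing_series => n _ _.
have S_ge0 n : 0 <= series u n by apply: sumr_ge0 => i _.
have S_split n1 n2 : (n1 <= n2)%N ->
    series u n2 = series u n1 + \sum_(n1 <= i < n2) u i.
  by move=> le12; rewrite /series /= (big_cat_nat (n := n1)).
have S_bound n : series u n <= series u (m + p) + K * series u n.
  have [le_n|lt_n] := leqP n (m + p).
    by apply: le_trans (S_nd _ _ le_n) _; rewrite lerDl mulr_ge0.
  have [k nE] : exists k, n = (k + p)%N by exists (n - p)%N; lia.
  subst n; have le_mk : (m <= k)%N by lia.
  rewrite [leLHS](S_split (m + p)%N) ?leq_add2r // lerD2l big_addn addnK.
  apply: (@le_trans _ _ (K * \sum_(m <= i < k) u i)).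
    by rewrite mulr_sumr; apply: ler_sum_nat => i /andP [mi _]; exact: decay.
  rewrite ler_wpM2l //; apply: le_trans _ (S_nd _ _ (leq_addr p k)).
  by rewrite (S_split m k) // lerDr.
apply: nondecreasing_is_cvgn => //; exists (series u (m + p) / (1 - K)).
move=> _ [n _ <-]; rewrite ler_pdivlMr ?subr_gt0 // mulrBr mulr1 lerBlDr.
by rewrite mulrC; exact: S_bound.
Qed.

Lemma nneseries_EFin_lim (u : R^nat) : cvgn (series u) ->
  (\sum_(l <oo) (u l)%:E)%E = (limn (series u))%:E.
Proof.
move=> cu; rewrite -EFin_lim //; congr (limn _); apply/funext => n /=.
by rewrite /series /= sumEFin.
Qed.

Lemma cvg_series_nneseries (u : R^nat) r : (forall l, 0 <= u l) ->
  (\sum_(l <oo) (u l)%:E)%E = r%:E -> series u @ \oo --> r.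
Proof.
move=> u0 ur; have cu : cvgn (series u) by apply: nnseries_is_cvg; rewrite ?ur ?ltry.
by move: ur; rewrite nneseries_EFin_lim // => -[<-].
Qed.

End Series.

Definition occ_words (b : nat) (w v : seq 'I_b) (k : nat) : set (seq 'I_b) :=
  [set X | prefix v X && (occurrences w X == k)].

Lemma eseries_Zcoef (R : realType) (b : nat) (w v : seq 'I_b) k :
  (\sum_(l <oo) ((Zcoef w v k l)%:R / (b%:R : R) ^+ l)%:E)%E =
  mass R (occ_words w v k).
Proof.
rewrite [in RHS](_ : occ_words w v k =
    \bigcup_l (occ_words w v k `&` [set X | size X = l])); last first.
  by apply/seteqP; split => [X wX | X [l _ []]] //; exists (size X).
rewrite /mass nneseries_sum_bigcup //; last first.
  by move=> i j _ _ [X [[_ <-] [_ <-]]].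
by apply: eq_eseriesr => l _; rewrite -/(mass _ _) mass_slice.
Qed.

Section OccurrenceMasses.
Variables (R : realType) (b : nat) (d : 'I_b) (v : seq 'I_b).
Local Notation w := (d :: v).
Local Notation occ := (occurrences w).
Local Notation mass := (@mass R b).
Local Notation words := (occ_words w v).

Let b_gt0 : (0 < b)%N.
Proof. exact: leq_ltn_trans (leq0n d) (ltn_ord d). Qed.

Definition return_words : set (seq 'I_b) :=
  [set rcons A d | A in [set A | prefix v (A ++ w) /\ occ (A ++ w) = 1%N]].

Lemma occ_words_succ k :
  words k.+1 = [set z.1 ++ z.2 | z in return_words `*` words k].
Proof.
apply/seteqP; split => [X /andP [vX /eqP occX] | X].
  have [|A [Z [XE occA]]] := @first_occurrence _ d v X; first by rewrite occX.
  exists (rcons A d, v ++ Z); last by rewrite /= cat_rcons XE.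
  split; last first.
    apply/andP; split; first exact: prefix_prefix.
    by move: occX; rewrite XE occurrences_cat_w occA => -[<-].
  exists A => //; split => //; rewrite -(prefix_cat_size Z) -?catA -?XE //.
  by rewrite size_cat /=; lia.
move=> [[_ Y] [[A [vA occA] <-] /andP [/prefixP [Z ->] /eqP occY]] <-] /=.
rewrite cat_rcons; apply/andP; split; first by rewrite -cat_cons catA prefix_catl.
by rewrite occurrences_cat_w occA occY.
Qed.

Lemma return_words_cat_inj k :
  set_inj (return_words `*` words k) (fun z => z.1 ++ z.2).
Proof.
apply: cat_set_inj => -[U Y] [U' Y'] /= [[A [_ occA] <-] /andP [/prefixP [Z ->] _]].
move=> [[A' [_ occA'] <-] /andP [/prefixP [Z' ->] _]].
rewrite !cat_rcons !size_rcons => E; congr S; apply/anti_leq.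
by rewrite (first_occurrence_leftmost occA E) (first_occurrence_leftmost occA' (esym E)).
Qed.

Lemma mass_occ_words_succ k t : mass (words k) = t%:E ->
  mass (words k.+1) = (mass return_words * t%:E)%E.
Proof. by move=> wk; rewrite occ_words_succ (mass_cat (@return_words_cat_inj k) wk). Qed.

Lemma occ_words0_extend_in :
  [set z.1 ++ z.2 | z in words 0 `*` [set C | size C = 1%N]] `&` words 0 =
  words 0 `&` ~` [set v].
Proof.
apply/seteqP; split => X.
  move=> [[[Y c] [/andP [vY _] /= szc] <-] wX]; split => //= Xv.
  by move: (size_prefix vY) (congr1 size Xv) => /=; rewrite size_cat szc; lia.
move=> [w0X Xv]; split => //; case/andP: w0X => vX /eqP occX.
have ltvX : (size v < size X)%N.
  rewrite ltn_neqAle size_prefix // andbT; apply: contra_notN Xv => /eqP szX.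
  by move: vX; rewrite prefixE szX take_size => /eqP.
case/lastP: X ltvX vX occX {Xv} => [//|Y c]; rewrite size_rcons ltnS => le_vY vX occY.
exists (Y, [:: c]); last by rewrite /= cats1.
split => //; apply/andP; split; first by rewrite -(prefix_cat_size [:: c]) // cats1.
by rewrite -leqn0 -occY -cats1 leq_occurrences_cat.
Qed.

Lemma occ_words0_extend_out :
  [set z.1 ++ z.2 | z in words 0 `*` [set C | size C = 1%N]] `&` ~` words 0 =
  [set z.1 ++ z.2 | z in return_words `*` [set v]].
Proof.
apply/seteqP; split => X.
  move=> [[[Y C] [/andP [vY /eqP occY] /= szC] <-] /= w0X].
  move: vY occY => /= vY occY; case: C szC w0X => [|c []] // _ w0X.
  have vX : prefix v (Y ++ [:: c]) by rewrite prefix_catl.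
  have [|A [Z [XE occA]]] := @first_occurrence _ d v (Y ++ [:: c]).
    by rewrite lt0n; apply: contra_notN w0X => occX; apply/andP.
  case/lastP: Z XE => [|Z z] XE.
    exists (rcons A d, v); last by rewrite /= cat_rcons XE cats0.
    by split => //; exists A => //; split => //; rewrite -[A ++ w]cats0 -catA -XE.
  move: XE; rewrite cats1 -!rcons_cat => /rcons_inj [YE _].
  by move: (@occurrences_cat_w_gt0 _ d v A Z); rewrite -YE occY.
move=> [[_ _] [[A [vA occA] <-] /= ->] <-] /=; rewrite cat_rcons.
split; last by move=> /andP [_]; rewrite occA.
have wE : A ++ w = (A ++ belast d v) ++ [:: last d v].
  by rewrite -catA cats1 -lastI.
exists (A ++ belast d v, [:: last d v]) => //; split => //=.
have le_vY : (size v <= size (A ++ belast d v))%N by rewrite size_cat size_belast leq_addl.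
apply/andP; split; first by rewrite -(prefix_cat_size [:: last d v]) // -wE.
rewrite -leqn0 leqNgt; apply/negP => /(@first_occurrence _ d v) [A' [Z' [YE _]]].
have := @first_occurrence_leftmost _ d v A A' [::] (rcons Z' (last d v)) occA.
rewrite cats0 wE YE -!catA cats1 => /(_ erefl).
by move: (congr1 size YE); rewrite !size_cat size_belast /=; lia.
Qed.

Lemma mass_return_words t : mass (words 0) = t%:E -> mass return_words = 1%E.
Proof.
move=> w0; set c := (b%:R : R) ^- size v.
have c_gt0 : 0 < c by rewrite invr_gt0 exprn_gt0 // ltr0n.
set E := [set z.1 ++ z.2 | z in words 0 `*` [set C | size C = 1%N]].
have mE : mass E = t%:E.
  rewrite /E (mass_cat _ (mass_size _ _ b_gt0)) ?w0 ?mule1 //.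
  apply: cat_set_inj => -[Y C] [Y' C'] [_ /= szC] [_ /= szC'] /(congr1 size).
  by rewrite !size_cat szC szC' => /addIn.
have mE' : mass E = (mass (words 0 `&` ~` [set v]) + mass return_words * c%:E)%E.
  rewrite /mass (esumID (words 0)) // -!/(mass _).
  rewrite occ_words0_extend_in occ_words0_extend_out (mass_cat _ (mass_set1 _ v)) //.
  apply: cat_set_inj => -[U Y] [U' Y'] [_ /= ->] [_ /= ->] /(congr1 size).
  by rewrite !size_cat => /addIn.
have m0 : t%:E = (c%:E + mass (words 0 `&` ~` [set v]))%E.
  rewrite -w0 /mass (esumID [set v]) // -!/(mass _) (_ : words 0 `&` [set v] = [set v]).
    by rewrite mass_set1.
  apply/seteqP; split => [X [] //| X ->]; split => //.
  by apply/andP; rewrite prefix_refl occurrences_small.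
move: (mass_ge0 R (words 0 `&` ~` [set v])) (mass_ge0 R return_words) mE' m0.
case: (mass (words 0 `&` ~` [set v])) => [x||] //.
case: (mass return_words) => [r||] // _ _; rewrite mE; last first.
  by rewrite gt0_mulye ?lte_fin // addey.
move=> ->; rewrite -EFinM -!EFinD => -[]; rewrite addrC => /addIr rc.
by congr EFin; apply: (mulIf (lt0r_neq0 c_gt0)); rewrite rc mul1r.
Qed.

Lemma Zcoef0_decay l : (size v <= l)%N ->
  (Zcoef w v 0 (l + size w))%:R / (b%:R : R) ^+ (l + size w) <=
  (1 - b%:R ^- size w) * ((Zcoef w v 0 l)%:R / b%:R ^+ l).
Proof.
move=> le_vl; pose S n := words 0 `&` [set X | size X = n].
have mS n : mass (S n) = ((Zcoef w v 0 n)%:R / (b%:R : R) ^+ n)%:E by exact: mass_slice.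
set B := [set X | X != w] `&` [set X | size X = size w].
have catI : set_inj (S l `*` B) (fun z => z.1 ++ z.2).
  by apply: cat_set_inj => -[X Y] [X' Y'] [[_ /= ->] _] [[_ /= ->] _].
rewrite [leRHS]mulrC -lee_fin -mS [leRHS]EFinM -mS.
rewrite -(mass_cat catI (mass_size_neq _ _ b_gt0)).
apply: le_mass => X [/andP [vX /eqP occX] szX].
exists (take l X, drop l X); last by rewrite /= cat_take_drop.
have le_lX : (l <= size X)%N by rewrite szX leq_addr.
split; split => /=; last by rewrite size_drop szX addKn.
- apply/andP; split; first by rewrite -(prefix_cat_size (drop l X)) ?cat_take_drop ?size_takel.
  by rewrite -leqn0 -occX -{2}(cat_take_drop l X) leq_occurrences_cat.
- exact: size_takel.
apply/eqP => dropw; have := occurrences_cat_ge w (take l X) (drop l X).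
by rewrite cat_take_drop occX dropw occurrences_self addn1.
Qed.

End OccurrenceMasses.

Theorem lemma4 (R : realType) (b : nat) (w : seq 'I_b) :
  (2 <= b)%N -> (1 <= size w)%N ->
  exists M : R, forall k : nat,
    [series (Zcoef w (behead w) k l)%:R / (b%:R ^+ l) : R]_l @ \oo --> M.
Proof.
move=> b_ge2; case: w => [//|d v] _ /=.
pose u k l : R := (Zcoef (d :: v) v k l)%:R / b%:R ^+ l.
have u_ge0 k l : 0 <= u k l by rewrite divr_ge0 ?exprn_ge0.
have b_gt0 : (0 < b)%N by apply: leq_trans b_ge2.
have cvg0 : cvgn (series (u 0%N)).
  apply: (@cvgn_series_decay _ _ (size v) (size (d :: v)) (1 - b%:R ^- size (d :: v))).
  - exact: u_ge0.
  - by rewrite subr_ge0 invf_le1 ?exprn_ege1 ?exprn_gt0 ?ler1n ?ltr0n.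
  - by rewrite ltrBlDr ltrDl invr_gt0 exprn_gt0 ?ltr0n.
  - exact: Zcoef0_decay.
have M0E : mass R (occ_words (d :: v) v 0) = (limn (series (u 0%N)))%:E.
  by rewrite -eseries_Zcoef nneseries_EFin_lim.
have Mk k : mass R (occ_words (d :: v) v k) = (limn (series (u 0%N)))%:E.
  elim: k => [//|k IH].
  by rewrite (mass_occ_words_succ IH) (mass_return_words M0E) mul1e.
by eexists => k; apply: cvg_series_nneseries; rewrite // eseries_Zcoef Mk.
Qed.
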